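(* Let $R,LM,C,\widetilde C,Ceq,\widetilde{Ceq},\sim,\simeq$ be as below. (1) If conditions (1.2), (2b), (2c), (2d) and (4a) hold, then $\sim$ is an equivalence relation on $C$. (2) If in addition conditions (1.3), (3b), (3c), (3d), (4b) and (4c) hold, then $\simeq$ is an equivalence relation on $\widetilde C$. The conditions (for all well-formed data) are: (1.2) $(\Gamma,T\rhd)\Rightarrow(\Gamma\rhd)$; (1.3) $(\Gamma\vdash r:R)\Rightarrow(\Gamma,R\rhd)$; (2b) $(\Gamma,T\rhd)\Rightarrow(\Gamma\vdash T=T)$; (2c) $(\Gamma\vdash T=T')\Rightarrow(\Gamma\vdash T'=T)$; (2d) $(\Gamma\vdash T=T')\wedge(\Gamma\vdash T'=T'')\Rightarrow(\Gamma\vdash T=T'')$; (3b) $(\Gamma\vdash o:T)\Rightarrow(\Gamma\vdash o=o:T)$; (3c) $(\Gamma\vdash o=o':T)\Rightarrow(\Gamma\vdash o'=o:T)$; (3d) $(\Gamma\vdash o=o':T)\wedge(\Gamma\vdash o'=o'':T)\Rightarrow(\Gamma\vdash o=o'':T)$; (4a) $(\Gamma_1\vdash T=T')\wedge(\Gamma_1,T,\Gamma_2\vdash S=S')\Rightarrow(\Gamma_1,T',\Gamma_2\vdash S=S')$; (4b) $(\Gamma_1\vdash T=T')\wedge(\Gamma_1,T,\Gamma_2\vdash o=o':S)\Rightarrow(\Gamma_1,T',\Gamma_2\vdash o=o':S)$; (4c) $(\Gamma\vdash S=S')\wedge(\Gamma\vdash o=o':S)\Rightarrow(\Gamma\vdash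 o=o':S')$.
   Context: $[n]=\{1,\dots,n\}$; $R$ is a monad on Sets and $LM$ a left $R$-module with values in Sets. $C\subset\coprod_n\prod_{j=0}^{n-1}LM([j])$, $\widetilde C\subset\coprod_n(\prod_{j=0}^nLM([j]))\times R([n])$, $Ceq\subset\coprod_n(\prod_{j=0}^{n-1}LM([j]))\times LM([n])^2$, $\widetilde{Ceq}\subset\coprod_n(\prod_{j=0}^nLM([j]))\times R([n])^2$ are subsets. Contexts are sequences $\Gamma=(T_1,\dots,T_n)$, $T_j\in LM([j-1])$, $l(\Gamma)=n$, $ft$ drops the last entry; commas denote concatenation. $(\Gamma\rhd)$: $\Gamma\in C$; $(\Gamma\vdash t:T)$: $(\Gamma,T,t)\in\widetilde C$; $(\Gamma\vdash S=S')$: $(\Gamma,S,S')\in Ceq$; $(\Gamma\vdash o=o':S)$: $(\Gamma,S,o,o')\in\widetilde{Ceq}$. $\sim$ on $C$: $(T_1,\dots,T_n)\sim(T'_1,\dots,T'_n)$ iff $n=0$, or $ft$'s are $\sim$-related and $(T_1,\dots,T_{n-1}\vdash T_n=T'_n)$ (recursive; different lengths never related). $\simeq$ on $\widetilde C$: $(\Gamma\vdash o:S)\simeq(\Gamma'\vdash o':S')$ iff $(\Gamma,S)\sim(\Gamma',S')$ and $(\Gamma\vdash o=o':S)$. *)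

From mathcomp Require Import all_boot.
Set Implicit Arguments. Unset Strict Implicit. Unset Printing Implicit Defensive.

Record Monad := {
  mon :> Type -> Type;
  ret : forall X, X -> mon X;
  bind : forall X Y, mon X -> (X -> mon Y) -> mon Y;
  bind_ret_l : forall X Y (x : X) (f : X -> mon Y), bind (ret x) f = f x;
  bind_ret_r : forall X (m : mon X), bind m (@ret X) = m;
  bind_assoc : forall X Y Z (m : mon X) (f : X -> mon Y) (g : Y -> mon Z),
      bind (bind m f) g = bind m (fun x => bind (f x) g)
}.

Record LModule (R : Monad) := {
  lmod :> Type -> Type;
  lbind : forall X Y, lmod X -> (X -> R Y) -> lmod Y;
  lbind_ret : forall X (m : lmod X), lbind m (@ret R X) = m;
  lbind_assoc : forall X Y Z (m : lmod X) (f : X -> R Y) (g : Y -> R Z),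
      lbind (lbind m f) g = lbind m (fun x => bind (f x) g)
}.

(* [n] = {1,...,n} is represented by the n-element type 'I_n. *)

Section Contexts.
Variables (R : Monad) (LM : LModule R).

(* Ctx n = prod_{j=0}^{n-1} LM([j]);  a context (T_1,...,T_n), T_j in LM([j-1]). *)
Fixpoint Ctx (n : nat) : Type :=
  match n with 0 => unit | S n => (Ctx n * LM 'I_n)%type end.

(* Ext k m : sequences (T_{k+1},...,T_{k+m}) with T_j in LM([j-1]),
   i.e. possible continuations of a context of length k. *)
Fixpoint Ext (k m : nat) : Type :=
  match m with 0 => unit | S m => (Ext k m * LM 'I_(m + k))%type end.

Fixpoint cat_ctx (k m : nat) : Ctx k -> Ext k m -> Ctx (m + k) :=
  match m return Ctx k -> Ext k m -> Ctx (m + k) with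
  | 0 => fun G _ => G
  | S m => fun G D => (cat_ctx G D.1, D.2)
  end.

Variable C : forall n, Ctx n -> Prop.
Variable Ceq : forall n, Ctx n -> LM 'I_n -> LM 'I_n -> Prop.
Variable Ceqt : forall n, Ctx n -> LM 'I_n -> R 'I_n -> R 'I_n -> Prop.

(* the relation ~ on contexts of length n (different lengths never related) *)
Fixpoint ctx_sim (n : nat) : Ctx n -> Ctx n -> Prop :=
  match n return Ctx n -> Ctx n -> Prop with
  | 0 => fun _ _ => True
  | S n => fun G G' => ctx_sim G.1 G'.1 /\ Ceq G.1 G.2 G'.2
  end.

(* the relation ~= on judgements (Gamma |- o : S), Gamma of length n *)
Definition term_sim (n : nat) (x y : (Ctx n * LM 'I_n * R 'I_n)%type) : Prop :=
  @ctx_sim n.+1 (x.1.1, x.1.2) (y.1.1, y.1.2) /\ Ceqt x.1.1 x.1.2 x.2 y.2.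

End Contexts.

Definition equiv_on (A : Type) (P : A -> Prop) (r : A -> A -> Prop) : Prop :=
  [/\ (forall x, P x -> r x x),
      (forall x y, P x -> P y -> r x y -> r y x) &
      (forall x y z, P x -> P y -> P z -> r x y -> r y z -> r x z)].

From mathcomp Require Import all_boot.

(* The only non-routine point is replacing a context by a ~-related one inside
   a judgement.  Peeling the last type T_k off Gamma, (4a)/(4b) replace T_k by
   T'_k in front of an arbitrary continuation Delta; the induction then
   continues on the shorter prefix with the longer continuation (T'_k, Delta).
   With this replacement lemma, reflexivity, symmetry and transitivity of ~ and
   of ~= follow componentwise from (2b-d), (3b-d) and (4c), by induction on the
   length of the context. *)

Set Implicit Arguments. Unset Strict Implicit. Unset Printing Implicit Defensive.

Lemma eq_rectK (F : nat -> Type) m n (e1 : m = n) (e2 : n = m) (x : F m) :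
  eq_rect n F (eq_rect m F x n e1) m e2 = x.
Proof. by case: n / e1 e2 => e2; rewrite (eq_irrelevance e2 erefl). Qed.

Section Concatenation.
Variables (R : Monad) (LM : LModule R).

Fixpoint ext_cons k m (T : LM 'I_k) : Ext LM k.+1 m -> Ext LM k m.+1 :=
  match m return Ext LM k.+1 m -> Ext LM k m.+1 with
  | 0 => fun _ => (tt, T)
  | m.+1 => fun D => (ext_cons T D.1, eq_rect _ (fun n => LM 'I_n) D.2 _ (addnS m k))
  end.

Lemma eq_rect_ctx_pair N N' (e : N.+1 = N'.+1) (G : Ctx LM N) (T : LM 'I_N) :
  eq_rect _ (Ctx LM) ((G, T) : Ctx LM N.+1) _ e =
  (eq_rect _ (Ctx LM) G _ (succn_inj e),
   eq_rect _ (fun n => LM 'I_n) T _ (succn_inj e)).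
Proof.
move: (succn_inj e) => e1; case: N' / e1 e => e.
by rewrite (eq_irrelevance e erefl).
Qed.

Lemma cat_ctx_cons k m (G : Ctx LM k) (T : LM 'I_k) (D : Ext LM k.+1 m)
    (e : m.+1 + k = m + k.+1) :
  @cat_ctx R LM k.+1 m (G, T) D = eq_rect _ (Ctx LM) (cat_ctx G (ext_cons T D)) _ e.
Proof.
elim: m D e => [|m IHm] D e /=; first by rewrite (eq_irrelevance e erefl).
by rewrite eq_rect_ctx_pair -(IHm _ (succn_inj e)) eq_rectK.
Qed.

End Concatenation.

Section CtxSimTransport.
Variables (R : Monad) (LM : LModule R).
Variable Ceq : forall n, Ctx LM n -> LM 'I_n -> LM 'I_n -> Prop.
Variables (D : nat -> Type) (J : forall N, Ctx LM N -> D N -> Prop).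

Hypothesis J_replace : forall n m (G : Ctx LM n) (T T' : LM 'I_n)
    (E : Ext LM n.+1 m) (d : D (m + n.+1)),
  Ceq G T T' -> J (@cat_ctx R LM n.+1 m (G, T) E) d ->
  J (@cat_ctx R LM n.+1 m (G, T') E) d.

Lemma J_eq_rect N N' (e : N = N') (X : Ctx LM N) (d : D N) :
  J X d -> J (eq_rect _ (Ctx LM) X _ e) (eq_rect _ D d _ e).
Proof. by case: N' / e. Qed.

Lemma ctx_sim_cat_transport k m (G G' : Ctx LM k) (E : Ext LM k m) (d : D (m + k)) :
  ctx_sim Ceq G G' -> J (cat_ctx G E) d -> J (cat_ctx G' E) d.
Proof.
elim: k m G G' E d => [|k IHk] m; first by case; case.
move=> [G T] [G' T'] E d /= [simGG' eqTT'] JGT.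
have e : m.+1 + k = m + k.+1 by rewrite addnS.
move: (J_replace eqTT' JGT); rewrite !(cat_ctx_cons _ _ _ e) => JGT'.
have := J_eq_rect (esym e) JGT'; rewrite eq_rectK => /(IHk _ _ _ _ _ simGG').
by move=> /(J_eq_rect e); rewrite !eq_rectK.
Qed.

End CtxSimTransport.

Section Equivalences.
Variables (R : Monad) (LM : LModule R).
Variable C : forall n, Ctx LM n -> Prop.
Variable Ceq : forall n, Ctx LM n -> LM 'I_n -> LM 'I_n -> Prop.

Hypothesis C_ft : forall n (G : Ctx LM n) (T : LM 'I_n), @C n.+1 (G, T) -> C G.
Hypothesis Ceq_refl : forall n (G : Ctx LM n) T, @C n.+1 (G, T) -> Ceq G T T.
Hypothesis Ceq_sym : forall n (G : Ctx LM n) T T', Ceq G T T' -> Ceq G T' T.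
Hypothesis Ceq_trans : forall n (G : Ctx LM n) T T' T'',
  Ceq G T T' -> Ceq G T' T'' -> Ceq G T T''.
Hypothesis Ceq_replace : forall n m (G : Ctx LM n) (T T' : LM 'I_n)
    (E : Ext LM n.+1 m) (S S' : LM 'I_(m + n.+1)),
  Ceq G T T' -> Ceq (@cat_ctx R LM n.+1 m (G, T) E) S S' ->
  Ceq (@cat_ctx R LM n.+1 m (G, T') E) S S'.

Lemma Ceq_ctx_sim n (G G' : Ctx LM n) T T' :
  ctx_sim Ceq G G' -> Ceq G T T' -> Ceq G' T T'.
Proof.
move=> simGG'.
exact: (@ctx_sim_cat_transport R LM Ceq (fun N => LM 'I_N * LM 'I_N)%type
  (fun N X d => Ceq X d.1 d.2) (fun n m G T T' E d => @Ceq_replace n m G T T' E d.1 d.2)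
  n 0 G G' tt (T, T') simGG').
Qed.

Lemma ctx_sim_equiv n : equiv_on (@C n) (ctx_sim Ceq (n:=n)).
Proof.
elim: n => [|n [IHrefl IHsym IHtrans]]; first by split.
split.
- by move=> [G T] /= CGT; split; [apply/IHrefl/(C_ft CGT) | apply: Ceq_refl].
- move=> [G T] [G' T'] /= CGT CGT' [simGG' eqTT'].
  have simG'G := IHsym _ _ (C_ft CGT) (C_ft CGT') simGG'.
  by split=> //; apply: Ceq_ctx_sim simGG' (Ceq_sym eqTT').
- move=> [G T] [G' T'] [G'' T''] /= CGT CGT' CGT'' [simGG' eqTT'] [simG'G'' eqT'T''].
  have simG'G := IHsym _ _ (C_ft CGT) (C_ft CGT') simGG'.
  split; first exact: IHtrans (C_ft CGT) (C_ft CGT') (C_ft CGT'') simGG' simG'G''.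
  by apply: Ceq_trans eqTT' _; apply: Ceq_ctx_sim simG'G eqT'T''.
Qed.

Variable Ct : forall n, Ctx LM n -> LM 'I_n -> R 'I_n -> Prop.
Variable Ceqt : forall n, Ctx LM n -> LM 'I_n -> R 'I_n -> R 'I_n -> Prop.

Hypothesis C_of_Ct : forall n (G : Ctx LM n) T o, Ct G T o -> @C n.+1 (G, T).
Hypothesis Ceqt_refl : forall n (G : Ctx LM n) T o, Ct G T o -> Ceqt G T o o.
Hypothesis Ceqt_sym : forall n (G : Ctx LM n) T o o', Ceqt G T o o' -> Ceqt G T o' o.
Hypothesis Ceqt_trans : forall n (G : Ctx LM n) T o o' o'',
  Ceqt G T o o' -> Ceqt G T o' o'' -> Ceqt G T o o''.
Hypothesis Ceqt_replace : forall n m (G : Ctx LM n) (T T' : LM 'I_n)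
    (E : Ext LM n.+1 m) (S : LM 'I_(m + n.+1)) (o o' : R 'I_(m + n.+1)),
  Ceq G T T' -> Ceqt (@cat_ctx R LM n.+1 m (G, T) E) S o o' ->
  Ceqt (@cat_ctx R LM n.+1 m (G, T') E) S o o'.
Hypothesis Ceqt_Ceq : forall n (G : Ctx LM n) S S' o o',
  Ceq G S S' -> Ceqt G S o o' -> Ceqt G S' o o'.

Lemma Ceqt_ctx_sim n (G G' : Ctx LM n) T o o' :
  ctx_sim Ceq G G' -> Ceqt G T o o' -> Ceqt G' T o o'.
Proof.
move=> simGG'.
exact: (@ctx_sim_cat_transport R LM Ceq (fun N => LM 'I_N * R 'I_N * R 'I_N)%type
  (fun N X d => Ceqt X d.1.1 d.1.2 d.2)
  (fun n m G T T' E d => @Ceqt_replace n m G T T' E d.1.1 d.1.2 d.2)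
  n 0 G G' tt (T, o, o') simGG').
Qed.

Lemma Ceqt_term_sim n (G G' : Ctx LM n) T T' o o' :
  ctx_sim Ceq (n:=n.+1) (G, T) (G', T') -> Ceqt G T o o' -> Ceqt G' T' o o'.
Proof. by move=> [simGG' eqTT'] /(Ceqt_Ceq eqTT') /(Ceqt_ctx_sim simGG'). Qed.

Lemma term_sim_equiv n :
  equiv_on (fun x : (Ctx LM n * LM 'I_n * R 'I_n)%type => Ct x.1.1 x.1.2 x.2)
           (term_sim Ceq Ceqt (n:=n)).
Proof.
have [simrefl simsym simtrans] := ctx_sim_equiv n.+1.
split.
- by move=> [[G T] o] /= CtGTo; split; [apply/simrefl/(C_of_Ct CtGTo) | apply: Ceqt_refl].
- move=> [[G T] o] [[G' T'] o'] /= CtGTo CtGTo' [simGT eqoo'].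
  by split; [exact: simsym (C_of_Ct CtGTo) (C_of_Ct CtGTo') simGT
            | exact: Ceqt_term_sim simGT (Ceqt_sym eqoo')].
- move=> [[G T] o] [[G' T'] o'] [[G'' T''] o''] /= CtGTo CtGTo' CtGTo''
    [simGT eqoo'] [simGT' eqo'o''].
  have simG'T := simsym _ _ (C_of_Ct CtGTo) (C_of_Ct CtGTo') simGT.
  split; first exact: simtrans (C_of_Ct CtGTo) (C_of_Ct CtGTo') (C_of_Ct CtGTo'') simGT simGT'.
  by apply: Ceqt_trans eqoo' _; apply: Ceqt_term_sim simG'T eqo'o''.
Qed.

End Equivalences.

Theorem lemma6p4 (R : Monad) (LM : LModule R)
  (C : forall n, Ctx LM n -> Prop)
  (Ct : forall n, Ctx LM n -> LM 'I_n -> R 'I_n -> Prop)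
  (Ceq : forall n, Ctx LM n -> LM 'I_n -> LM 'I_n -> Prop)
  (Ceqt : forall n, Ctx LM n -> LM 'I_n -> R 'I_n -> R 'I_n -> Prop) :
  let H12 := forall n (G : Ctx LM n) (T : LM 'I_n), C n.+1 (G, T) -> C n G in
  let H13 := forall n (G : Ctx LM n) (T : LM 'I_n) (r : R 'I_n),
      Ct n G T r -> C n.+1 (G, T) in
  let H2b := forall n (G : Ctx LM n) (T : LM 'I_n), C n.+1 (G, T) -> Ceq n G T T in
  let H2c := forall n (G : Ctx LM n) (T T' : LM 'I_n), Ceq n G T T' -> Ceq n G T' T in
  let H2d := forall n (G : Ctx LM n) (T T' T'' : LM 'I_n),
      Ceq n G T T' -> Ceq n G T' T'' -> Ceq n G T T'' in
  let H3b := forall n (G : Ctx LM n) (T : LM 'I_n) (o : R 'I_n),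
      Ct n G T o -> Ceqt n G T o o in
  let H3c := forall n (G : Ctx LM n) (T : LM 'I_n) (o o' : R 'I_n),
      Ceqt n G T o o' -> Ceqt n G T o' o in
  let H3d := forall n (G : Ctx LM n) (T : LM 'I_n) (o o' o'' : R 'I_n),
      Ceqt n G T o o' -> Ceqt n G T o' o'' -> Ceqt n G T o o'' in
  let H4a := forall n m (G1 : Ctx LM n) (T T' : LM 'I_n) (G2 : Ext LM n.+1 m)
      (S S' : LM 'I_(m + n.+1)),
      Ceq n G1 T T' ->
      Ceq (m + n.+1) (@cat_ctx R LM n.+1 m (G1, T) G2) S S' ->
      Ceq (m + n.+1) (@cat_ctx R LM n.+1 m (G1, T') G2) S S' in
  let H4b := forall n m (G1 : Ctx LM n) (T T' : LM 'I_n) (G2 : Ext LM n.+1 m)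
      (S : LM 'I_(m + n.+1)) (o o' : R 'I_(m + n.+1)),
      Ceq n G1 T T' ->
      Ceqt (m + n.+1) (@cat_ctx R LM n.+1 m (G1, T) G2) S o o' ->
      Ceqt (m + n.+1) (@cat_ctx R LM n.+1 m (G1, T') G2) S o o' in
  let H4c := forall n (G : Ctx LM n) (S S' : LM 'I_n) (o o' : R 'I_n),
      Ceq n G S S' -> Ceqt n G S o o' -> Ceqt n G S' o o' in
  (H12 -> H2b -> H2c -> H2d -> H4a ->
     forall n, equiv_on (@C n) (@ctx_sim R LM Ceq n)) /\
  (H12 -> H2b -> H2c -> H2d -> H4a ->
   H13 -> H3b -> H3c -> H3d -> H4b -> H4c ->
     forall n, equiv_on (fun x : (Ctx LM n * LM 'I_n * R 'I_n)%type =>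
                           Ct n x.1.1 x.1.2 x.2)
                        (@term_sim R LM Ceq Ceqt n)).
Proof.
move=> H12 H13 H2b H2c H2d H3b H3c H3d H4a H4b H4c; split.
- by move=> C_ft Ceq_refl Ceq_sym Ceq_trans Ceq_replace n; apply: ctx_sim_equiv.
- move=> C_ft Ceq_refl Ceq_sym Ceq_trans Ceq_replace
    C_of_Ct Ceqt_refl Ceqt_sym Ceqt_trans Ceqt_replace Ceqt_Ceq n.
  exact: (term_sim_equiv C_ft Ceq_refl Ceq_sym Ceq_trans Ceq_replace
    C_of_Ct Ceqt_refl Ceqt_sym Ceqt_trans Ceqt_replace Ceqt_Ceq).
Qed.
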